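(* Let $\phi = (C,\chi)$ be a fixed point of $\llbracket S \triangleleft Q\rrbracket$, let $i : I$, and let $f : D \to C$ be a $\phi$-retraction, with lifts $\widehat{f}_d : Q(\xi_0(f\,d)) \to D$ and paths $e_d : f \circ \widehat f_d = \xi_1(f\,d)$. Let $A : (d : D) \to \mathsf{Pos}\,\phi\,i\,(f\,d) \to \mathsf{Type}$ be a type family equipped with - $h : \{d : D\}\,(p : \mathbf{P}\,i\,(\xi_0(f\,d))) \to A\,d\,(\mathsf{here}\,p)$; - $b : \{d : D\}\,(q : Q(\xi_0(f\,d)))\,(p : \mathsf{Pos}\,\phi\,i\,(\xi_1(f\,d)\,q)) \to A\,(\widehat f_d\,q)\,\widehat p \to A\,d\,(\mathsf{below}\,q\,p)$, where $\widehat p : \mathsf{Pos}\,\phi\,i\,(f(\widehat f_d\,q))$ is $p$ transported along the path (obtained from $e_d$ at $q$) $\xi_1(f\,d)\,q = f(\widehat f_d\,q)$. Then this data induces a dependent function $(d : D)\,(p : \mathsf{Pos}\,\phi\,i\,(f\,d)) \to A\,d\,p$.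
   Context: Work in intensional Martin-Löf type theory (as in Cubical Agda) with function extensionality, without assuming uniqueness of identity proofs. Fix types $I$, $S$, families $\mathbf{P} : I \to S \to \mathsf{Type}$ and $Q : S \to \mathsf{Type}$. The container functor of $S \triangleleft Q$ is $\llbracket S\triangleleft Q\rrbracket X = \sum_{s:S}(Q\,s \to X)$. A fixed point $\phi$ of $\llbracket S\triangleleft Q\rrbracket$ consists of a type $C$ and an equivalence $\chi : \sum_{s:S}(Q\,s\to C) \simeq C$; write $\xi : C \to \sum_{s:S}(Q\,s \to C)$ for its inverse, with components $\xi_0\,c : S$ and $\xi_1\,c : Q(\xi_0\,c) \to C$. For $i : I$, $\mathsf{Pos}\,\phi\,i : C \to \mathsf{Type}$ is the inductive family with constructors $\mathsf{here} : \mathbf{P}\,i\,(\xi_0\,c) \to \mathsf{Pos}\,\phi\,i\,c$ and $\mathsf{below} : (q : Q(\xi_0\,c)) \to \mathsf{Pos}\,\phi\,i\,(\xi_1\,c\,q) \to \mathsf{Pos}\,\phi\,i\,c$. A function $f : D \to C$ is a $\phi$-retraction if for every $d : D$ there is a function $\widehat f_d : Q(\xi_0(f\,d)) \to D$ together with a path $f \circ \widehat f_d = \xi_1(f\,d)$. *)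

Set Implicit Arguments.
Set Universe Polymorphism.

Definition Ext (S : Type) (Q : S -> Type) (X : Type) : Type :=
  { s : S & Q s -> X }.

(* Equivalences as bi-invertible maps (a proposition in HoTT). *)
Definition IsEquiv (A B : Type) (f : A -> B) : Type :=
  ({ g : B -> A & forall x, g (f x) = x } * { h : B -> A & forall y, f (h y) = y })%type.

Record FixedPoint (S : Type) (Q : S -> Type) : Type := mkFixedPoint {
  fp_C : Type;
  fp_chi : Ext Q fp_C -> fp_C;
  fp_chi_equiv : IsEquiv fp_chi
}.

(* xi : the inverse of chi (chosen as the inverse supplied by the equivalence). *)
Definition xi (S : Type) (Q : S -> Type) (phi : FixedPoint Q) :
  fp_C phi -> Ext Q (fp_C phi) :=
  projT1 (snd (fp_chi_equiv phi)).

Definition xi0 (S : Type) (Q : S -> Type) (phi : FixedPoint Q) (c : fp_C phi) : S :=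
  projT1 (xi phi c).

Definition xi1 (S : Type) (Q : S -> Type) (phi : FixedPoint Q) (c : fp_C phi) :
  Q (xi0 phi c) -> fp_C phi :=
  projT2 (xi phi c).

Inductive Pos (I S : Type) (P : I -> S -> Type) (Q : S -> Type)
    (phi : FixedPoint Q) (i : I) : fp_C phi -> Type :=
| here : forall c : fp_C phi, P i (xi0 phi c) -> Pos P phi i c
| below : forall (c : fp_C phi) (q : Q (xi0 phi c)),
    Pos P phi i (xi1 phi c q) -> Pos P phi i c.

Definition retr_path (S D : Type) (Q : S -> Type) (phi : FixedPoint Q)
    (f : D -> fp_C phi) (d : D) (fhat_d : Q (xi0 phi (f d)) -> D)
    (e_d : (fun q => f (fhat_d q)) = xi1 phi (f d)) (q : Q (xi0 phi (f d))) :
    xi1 phi (f d) q = f (fhat_d q) :=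
  eq_sym (f_equal (fun g => g q) e_d).

Definition lift_pos (I S D : Type) (P : I -> S -> Type) (Q : S -> Type)
    (phi : FixedPoint Q) (i : I)
    (f : D -> fp_C phi) (d : D) (fhat_d : Q (xi0 phi (f d)) -> D)
    (e_d : (fun q => f (fhat_d q)) = xi1 phi (f d)) (q : Q (xi0 phi (f d)))
    (p : Pos P phi i (xi1 phi (f d) q)) : Pos P phi i (f (fhat_d q)) :=
  eq_rect _ (Pos P phi i) p _ (@retr_path S D Q phi f d fhat_d e_d q).

(* Positions over [f d] cannot be eliminated directly, since [Pos] is indexed
   by arbitrary points of [C]. Induction on [Pos] therefore runs over an
   arbitrary [c] together with a point [d] of the fiber of [f] over [c]; in the
   [below] case, the retraction structure supplies the point [fhat d q] of the
   fiber over [xi1 (f d) q], and the transport along [e d] there is exactly the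
   one defining [lift_pos]. *)


Section RetractionInduction.

Variables (I S : Type) (P : I -> S -> Type) (Q : S -> Type).
Variables (phi : FixedPoint Q) (i : I) (D : Type) (f : D -> fp_C phi).
Variable fhat : forall d : D, Q (xi0 phi (f d)) -> D.
Variable e : forall d : D, (fun q => f (fhat d q)) = xi1 phi (f d).
Variable A : forall d : D, Pos P phi i (f d) -> Type.
Hypothesis h : forall (d : D) (p : P i (xi0 phi (f d))), A d (@here I S P Q phi i (f d) p).
Hypothesis b : forall (d : D) (q : Q (xi0 phi (f d))) (p : Pos P phi i (xi1 phi (f d) q)),
  A (fhat d q) (@lift_pos I S D P Q phi i f d (fhat d) (e d) q p) ->
  A d (@below I S P Q phi i (f d) q p).

Lemma Pos_rect_fiber {c : fp_C phi} (p : Pos P phi i c) :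
  forall (d : D) (w : f d = c), A d (eq_rect c (Pos P phi i) p (f d) (eq_sym w)).
Proof.
  induction p as [c p0 | c q p' IH]; intros d w; destruct w; simpl.
  - apply h.
  - apply b. exact (IH (fhat d q) (f_equal (fun g => g q) (e d))).
Qed.

Lemma Pos_retraction_rect (d : D) (p : Pos P phi i (f d)) : A d p.
Proof. exact (Pos_rect_fiber p d eq_refl). Qed.

End RetractionInduction.

Theorem mainTheorem1 (I S : Type) (P : I -> S -> Type) (Q : S -> Type)
  (phi : FixedPoint Q) (i : I) (D : Type) (f : D -> fp_C phi)
  (fhat : forall d : D, Q (xi0 phi (f d)) -> D)
  (e : forall d : D, (fun q => f (fhat d q)) = xi1 phi (f d))
  (A : forall d : D, Pos P phi i (f d) -> Type)
  (h : forall (d : D) (p : P i (xi0 phi (f d))), A d (@here I S P Q phi i (f d) p))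
  (b : forall (d : D) (q : Q (xi0 phi (f d))) (p : Pos P phi i (xi1 phi (f d) q)),
       A (fhat d q) (@lift_pos I S D P Q phi i f d (fhat d) (e d) q p) ->
       A d (@below I S P Q phi i (f d) q p)) :
  forall (d : D) (p : Pos P phi i (f d)), A d p.
Proof. exact (@Pos_retraction_rect I S P Q phi i D f fhat e A h b). Qed.
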